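(* Let $r$ be a positive integer and let $(P,\mathcal{L})$ be an intersecting linear system of rank $r$ satisfying $\tau(P,\mathcal{L})=\nu_2(P,\mathcal{L})=r$. Then $(P,\mathcal{L})$ is $r$-uniform, i.e., every line has exactly $r$ points.
   Context: A linear system is a pair $(P,\mathcal{L})$ with $P$ a finite set of points and $\mathcal{L}$ a family of subsets of $P$ (lines) such that any two distinct lines share at most one point; it is intersecting if any two distinct lines share exactly one point. The rank is the maximum cardinality of a line. A transversal is a set of points meeting every line; $\tau$ is the minimum size of a transversal. A 2-packing is a set of lines no three of which share a common point; $\nu_2$ is its maximum size. *)

From mathcomp Require Import all_boot.
Set Implicit Arguments. Unset Strict Implicit. Unset Printing Implicit Defensive.

(* A linear system: points = finite type T, lines = a family L of subsets of T. *)
Definition linear_system (T : finType) (L : {set {set T}}) : Prop :=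
  forall l1 l2, l1 \in L -> l2 \in L -> l1 != l2 -> #|l1 :&: l2| <= 1.

Definition intersecting (T : finType) (L : {set {set T}}) : Prop :=
  forall l1 l2, l1 \in L -> l2 \in L -> l1 != l2 -> #|l1 :&: l2| = 1.

Definition has_rank (T : finType) (L : {set {set T}}) (r : nat) : Prop :=
  (exists2 l, l \in L & #|l| = r) /\ (forall l, l \in L -> #|l| <= r).

Definition transversal (T : finType) (L : {set {set T}}) (S : {set T}) : Prop :=
  forall l, l \in L -> exists2 x, x \in S & x \in l.

Definition tau_eq (T : finType) (L : {set {set T}}) (k : nat) : Prop :=
  (exists2 S, transversal L S & #|S| = k) /\
  (forall S, transversal L S -> k <= #|S|).

Definition two_packing (T : finType) (L : {set {set T}}) (Q : {set {set T}}) : Prop :=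
  Q \subset L /\
  forall l1 l2 l3, l1 \in Q -> l2 \in Q -> l3 \in Q ->
    l1 != l2 -> l1 != l3 -> l2 != l3 -> l1 :&: l2 :&: l3 = set0.

Definition nu2_eq (T : finType) (L : {set {set T}}) (k : nat) : Prop :=
  (exists2 Q, two_packing L Q & #|Q| = k) /\
  (forall Q, two_packing L Q -> #|Q| <= k).

(* In an intersecting system every line meets all the others, so each line is
   itself a transversal; hence r = tau <= |l| <= r for every line l. Only the
   upper bound on line sizes and the value of tau are used. *)

From Pilot Require Import Defs.
From mathcomp Require Import all_boot.

Set Implicit Arguments.

Section IntersectingSystem.

Variables (T : finType) (L : {set {set T}}).

Lemma transversal_line_nonempty (S l : {set T}) :
  Defs.transversal L S -> l \in L -> l != set0.
Proof. by move=> tS Ll; apply/set0Pn; have [x _ xl] := tS l Ll; exists x. Qed.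

Lemma intersecting_line_transversal (l : {set T}) :
  intersecting L -> l \in L -> l != set0 -> Defs.transversal L l.
Proof.
move=> intL Ll /set0Pn[x0 x0l] l' Ll'.
have [->|l'l] := eqVneq l' l; first by exists x0.
have /eqP/cards1P[x lIl'] := intL l' l Ll' Ll l'l.
have : x \in l' :&: l by rewrite lIl' set11.
by rewrite inE => /andP[xl' xl]; exists x.
Qed.

End IntersectingSystem.

Theorem lemma4p1 (T : finType) (L : {set {set T}}) (r : nat) :
  0 < r ->
  linear_system L -> intersecting L -> has_rank L r ->
  tau_eq L r -> nu2_eq L r ->
  forall l, l \in L -> #|l| = r.
Proof.
move=> _ _ intL [_ rank_le] [[S tS _] tau_le] _ l Ll.
have tl : Defs.transversal L l.
  exact: intersecting_line_transversal intL Ll (transversal_line_nonempty tS Ll).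
by apply/eqP; rewrite eqn_leq rank_le // tau_le.
Qed.
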